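(* Let $M$ be a locally principally quasi-retractable right $R$-module with $S=\mathrm{End}_R(M)$. If $S$ is a left centrally AIP ring, then $M$ is a centrally endo-AIP module.
   Context: For $X\subseteq M$, $l_S(X)=\{\phi\in S:\phi(X)=0\}$; for $I\subseteq S$, $r_M(I)=\{m\in M: I m=0\}$, and for $T\subseteq S$, $l_S(T)=\{f\in S: fT=0\}$. $M$ is locally principally quasi-retractable if for every principal ideal $I$ of $S$ with $r_M(I)\neq 0$ there is a nonzero $\psi\in S$ with $r_M(I)=\psi(M)$. An ideal $J$ of $S$ is centrally s-unital if for every $a\in J$ there is $z\in J$ central in $S$ with $az=a$. $S$ is left centrally AIP if $l_S(T)$ is centrally s-unital for every ideal $T$ of $S$. $M$ is centrally endo-AIP if $l_S(N)$ is a centrally s-unital ideal of $S$ for every fully invariant submodule $N$ of $M$. *)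

From HB Require Import structures.
From mathcomp Require Import all_boot all_algebra.
Set Implicit Arguments. Unset Strict Implicit. Unset Printing Implicit Defensive.
Import GRing.Theory.
Local Open Scope ring_scope.

(* A right R-module M is modelled as a left module over the converse ring R^c.
   S = End_R(M) is the set of R-linear maps M -> M (predicate [endo]),
   acting on the left of M, with product in S = composition (f g = f \o g). *)

Section Defs.
Variable R : nzRingType.
Variable M : lmodType R^c.

Definition endo (f : M -> M) : Prop :=
  forall (a : R^c) (u v : M), f (a *: u + v) = a *: f u + f v.

Definition S_ideal (J : (M -> M) -> Prop) : Prop :=
  [/\ (forall f, J f -> endo f),
      J (fun _ => 0),
      (forall f g, J f -> J g -> J (fun m => f m - g m)),
      (forall s f, endo s -> J f -> J (s \o f)) &
      (forall s f, endo s -> J f -> J (f \o s))].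

Definition gen_ideal (a : M -> M) : (M -> M) -> Prop :=
  fun f => forall J, S_ideal J -> J a -> J f.

Definition principal_ideal (I : (M -> M) -> Prop) : Prop :=
  exists a, endo a /\ (forall f, I f <-> gen_ideal a f).

Definition r_M (I : (M -> M) -> Prop) : M -> Prop :=
  fun m => forall f, I f -> f m = 0.

Definition l_S_mod (X : M -> Prop) : (M -> M) -> Prop :=
  fun f => endo f /\ forall m, X m -> f m = 0.

Definition l_S_ring (T : (M -> M) -> Prop) : (M -> M) -> Prop :=
  fun f => endo f /\ forall g, T g -> forall m, f (g m) = 0.

Definition central (z : M -> M) : Prop :=
  endo z /\ forall s, endo s -> forall m, z (s m) = s (z m).

Definition centrally_s_unital (J : (M -> M) -> Prop) : Prop :=
  forall a, J a -> exists z, [/\ J z, central z & forall m, a (z m) = a m].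

Definition loc_princ_quasi_retractable : Prop :=
  forall I, principal_ideal I -> (exists m, r_M I m /\ m <> 0) ->
    exists psi, [/\ endo psi, (exists m, psi m <> 0) &
                    forall m, r_M I m <-> exists x, m = psi x].

Definition left_centrally_AIP : Prop :=
  forall T, S_ideal T -> centrally_s_unital (l_S_ring T).

Definition submodule (N : M -> Prop) : Prop :=
  [/\ N 0, (forall u v, N u -> N v -> N (u - v)) &
      (forall (a : R^c) u, N u -> N (a *: u))].

Definition fully_invariant (N : M -> Prop) : Prop :=
  submodule N /\ forall f m, endo f -> N m -> N (f m).

Definition centrally_endo_AIP : Prop :=
  forall N, fully_invariant N ->
    S_ideal (l_S_mod N) /\ centrally_s_unital (l_S_mod N).

End Defs.

(* Let phi kill the fully invariant submodule N and put I = S phi S, so that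
   N is contained in r_M(I).  If r_M(I) = 0 then N = 0 and the identity is the
   required central unit.  Otherwise quasi-retractability gives r_M(I) = psi(M).
   The endomorphisms with image in r_M(I) form an ideal T of S, which phi kills;
   since S is left centrally AIP, phi z = phi for a central z killing T, and z
   kills psi(M) = r_M(I), hence N, because psi lies in T. *)

From HB Require Import structures.
From mathcomp Require Import all_boot all_algebra.
From Stdlib Require Import Classical.
Import GRing.Theory.
Local Open Scope ring_scope.
Set Implicit Arguments.

Section EndoAIP.
Variable R : nzRingType.
Variable M : lmodType R^c.
Implicit Types (f g s a z psi : M -> M) (X Y : M -> Prop) (I : (M -> M) -> Prop).

Lemma endoD f u v : endo f -> f (u + v) = f u + f v.
Proof. by move=> endo_f; have := endo_f 1 u v; rewrite !scale1r. Qed.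

Lemma endo0 f : endo f -> f 0 = 0.
Proof.
move=> endo_f; apply: (addrI (f 0)).
by rewrite addr0 -endoD ?addr0.
Qed.

Lemma endoB f u v : endo f -> f (u - v) = f u - f v.
Proof.
move=> endo_f; have := endo_f (-1) v 0.
by rewrite addr0 endo0 // addr0 !scaleN1r endoD // => ->.
Qed.

Lemma endo_comp f g : endo f -> endo g -> endo (f \o g).
Proof. by move=> endo_f endo_g a u v /=; rewrite endo_g endo_f. Qed.

Lemma endo_sub f g : endo f -> endo g -> endo (fun m => f m - g m).
Proof. by move=> endo_f endo_g a u v; rewrite endo_f endo_g scalerBr opprD addrACA. Qed.

Lemma endo_zero : endo (fun _ : M => 0).
Proof. by move=> a u v; rewrite scaler0 addr0. Qed.

Lemma S_ideal_endo : S_ideal (@endo R M).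
Proof.
split=> //; [exact: endo_zero | exact: endo_sub | |];
  by move=> s f endo_s endo_f; apply: endo_comp.
Qed.

Lemma gen_ideal_self a : gen_ideal a a.
Proof. by []. Qed.

Lemma S_ideal_gen_ideal a : endo a -> S_ideal (gen_ideal a).
Proof.
move=> endo_a; split.
- by move=> f Jf; apply: (Jf _ S_ideal_endo).
- by move=> J [].
- move=> f g Jf Jg J idJ Ja; have [_ _ subJ _ _] := idJ.
  by apply: subJ; [exact: Jf | exact: Jg].
- move=> s f endo_s Jf J idJ Ja; have [_ _ _ mulJ _] := idJ.
  by apply: mulJ; [| exact: Jf].
- move=> s f endo_s Jf J idJ Ja; have [_ _ _ _ mulJ] := idJ.
  by apply: mulJ; [| exact: Jf].
Qed.

Lemma principal_gen_ideal a : endo a -> principal_ideal (gen_ideal a).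
Proof. by exists a. Qed.

Lemma r_M_ideal_closed I : S_ideal I ->
  [/\ r_M I 0, (forall u v, r_M I u -> r_M I v -> r_M I (u - v)) &
      (forall s m, endo s -> r_M I m -> r_M I (s m))].
Proof.
case=> endoI _ _ _ mulI; split.
- by move=> f /endoI; apply: endo0.
- by move=> u v Iu Iv f If; rewrite endoB ?Iu ?Iv ?subr0 //; apply: endoI.
- by move=> s m endo_s Im f If; apply: (Im (f \o s)); apply: mulI.
Qed.

Definition maps_into X : (M -> M) -> Prop := fun g => endo g /\ forall m, X (g m).

Lemma S_ideal_maps_into X :
  X 0 -> (forall u v, X u -> X v -> X (u - v)) ->
  (forall s m, endo s -> X m -> X (s m)) -> S_ideal (maps_into X).
Proof.
move=> X0 subX invX; split.
- by move=> f [].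
- by split; [exact: endo_zero | ].
- move=> f g [endo_f Xf] [endo_g Xg]; split; first exact: endo_sub.
  by move=> m; exact: subX.
- move=> s f endo_s [endo_f Xf]; split; first exact: endo_comp.
  by move=> m; exact: invX (Xf m).
- move=> s f endo_s [endo_f Xf]; split; first exact: endo_comp.
  by move=> m; exact: Xf.
Qed.

Lemma l_S_mod_ideal {X} : (forall f m, endo f -> X m -> X (f m)) -> S_ideal (l_S_mod X).
Proof.
move=> invX; split.
- by move=> f [].
- by split; [exact: endo_zero | ].
- move=> f g [endo_f fX] [endo_g gX]; split; first exact: endo_sub.
  by move=> m Xm; rewrite fX // gX // subr0.
- move=> s f endo_s [endo_f fX]; split; first exact: endo_comp.
  by move=> m Xm /=; rewrite fX // endo0.
- move=> s f endo_s [endo_f fX]; split; first exact: endo_comp.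
  by move=> m Xm /=; rewrite fX //; apply: invX.
Qed.

Lemma l_S_modS X Y f : (forall m, X m -> Y m) -> l_S_mod Y f -> l_S_mod X f.
Proof. by move=> XY [endo_f fY]; split=> // m /XY; apply: fY. Qed.

Lemma sub_r_M_gen_ideal {X a} :
  S_ideal (l_S_mod X) -> l_S_mod X a -> forall m, X m -> r_M (gen_ideal a) m.
Proof. by move=> idX aX m Xm f Jf; case: (Jf _ idX aX) => _; apply. Qed.

Lemma l_S_mod_r_M I a : endo a -> I a -> l_S_mod (r_M I) a.
Proof. by move=> endo_a Ia; split=> // m; apply. Qed.

Lemma l_S_ring_maps_into X a : l_S_mod X a -> l_S_ring (maps_into X) a.
Proof. by case=> endo_a aX; split=> // g [_ Xg] m; apply: aX. Qed.

Lemma l_S_mod_of_l_S_ring_maps_into X psi z :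
  endo psi -> (forall x, X (psi x)) -> (forall m, X m -> exists x, m = psi x) ->
  l_S_ring (maps_into X) z -> l_S_mod X z.
Proof.
move=> endo_psi Xpsi onto_X [endo_z zT]; split=> // m /onto_X [x ->].
exact: (zT psi).
Qed.

Lemma central_unit_killing_r_M {I phi psi} :
  left_centrally_AIP M -> S_ideal I -> I phi -> endo psi ->
  (forall m, r_M I m <-> exists x, m = psi x) ->
  exists z, [/\ l_S_mod (r_M I) z, central z & forall m, phi (z m) = phi m].
Proof.
move=> aip idI Iphi endo_psi r_M_psi.
have [r_M0 r_MB r_M_inv] := r_M_ideal_closed idI.
have idT : S_ideal (maps_into (r_M I)) by apply: S_ideal_maps_into.
have phiT : l_S_ring (maps_into (r_M I)) phi.
  have [endoI _ _ _ _] := idI.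
  by apply/l_S_ring_maps_into/l_S_mod_r_M => //; apply: endoI.
have [z [zT zc zphi]] := aip _ idT phi phiT.
exists z; split=> //; apply: (l_S_mod_of_l_S_ring_maps_into endo_psi) => //.
- by move=> x; apply/r_M_psi; exists x.
- by move=> m /r_M_psi.
Qed.

End EndoAIP.

Theorem proposition3p5 (R : nzRingType) (M : lmodType R^c) :
  loc_princ_quasi_retractable M -> left_centrally_AIP M -> centrally_endo_AIP M.
Proof.
move=> lpqr aip N [_ invN]; have idN := l_S_mod_ideal invN.
split=> // phi phiN; have [endo_phi _] := phiN.
have idI := S_ideal_gen_ideal endo_phi.
have N_r_M := sub_r_M_gen_ideal idN phiN.
have [r_M_nz | r_M0] := classic (exists m, r_M (gen_ideal phi) m /\ m <> 0).
- have [psi [endo_psi _ r_M_psi]] := lpqr _ (principal_gen_ideal endo_phi) r_M_nz.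
  have [z [zI zc zphi]] :=
    central_unit_killing_r_M aip idI (gen_ideal_self phi) endo_psi r_M_psi.
  by exists z; split=> //; apply: l_S_modS zI.
- exists id; split=> //; split=> // m Nm.
  apply/eqP; apply: contraT => /eqP m_nz.
  by case: r_M0; exists m; split=> //; apply: N_r_M.
Qed.
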